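(* Let $K$ be a field, $n\ge2$, and $\vartheta$ any one of the four types (left, right, pre-two-sided, two-sided). A $K$-subspace $V\subset M_n(K)$ is a minimal non-trivial $\vartheta$-Mathieu subspace of $M_n(K)$ if and only if $V=KA$ for some nonzero $A\in M_n(K)$ which is not a quasi-idempotent.
   Context: $M_n(K)$ is the algebra of $n\times n$ matrices over $K$. $A$ is a quasi-idempotent if $A^2=rA$ for some $r\in K^\times$. A subspace is non-trivial if it is neither $0$ nor the whole algebra; a minimal non-trivial $\vartheta$-Mathieu subspace is one minimal under inclusion among non-trivial $\vartheta$-Mathieu subspaces. A $K$-subspace $V$ of an algebra $\mathcal A$ is a left (resp. right) Mathieu subspace if whenever $a^m\in V$ for all $m\ge1$, then for every $b\in\mathcal A$, $ba^m\in V$ (resp. $a^mb\in V$) for all sufficiently large $m$; pre-two-sided if both left and right; two-sided if whenever $a^m\in V$ for all $m\ge1$, for all $b,c\in\mathcal A$, $ba^mc\in V$ for all sufficiently large $m$. *)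

From HB Require Import structures.
From mathcomp Require Import all_boot all_order all_algebra.
Set Implicit Arguments. Unset Strict Implicit. Unset Printing Implicit Defensive.
Import GRing.Theory.
Local Open Scope ring_scope.

Inductive mathieu_type := MLeft | MRight | MPreTwoSided | MTwoSided.

Section Mathieu.
Variable R : pzRingType.

Definition all_pows_in (V : {pred R}) (a : R) : Prop :=
  forall m : nat, (0 < m)%N -> a ^+ m \in V.

Definition left_mathieu (V : {pred R}) : Prop :=
  forall a, all_pows_in V a ->
  forall b, exists N : nat, forall m : nat, (N <= m)%N -> b * a ^+ m \in V.

Definition right_mathieu (V : {pred R}) : Prop :=
  forall a, all_pows_in V a ->
  forall b, exists N : nat, forall m : nat, (N <= m)%N -> a ^+ m * b \in V.

Definition pre_two_sided_mathieu (V : {pred R}) : Prop :=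
  left_mathieu V /\ right_mathieu V.

Definition two_sided_mathieu (V : {pred R}) : Prop :=
  forall a, all_pows_in V a ->
  forall b c, exists N : nat, forall m : nat, (N <= m)%N -> b * a ^+ m * c \in V.

Definition is_mathieu (t : mathieu_type) (V : {pred R}) : Prop :=
  match t with
  | MLeft => left_mathieu V
  | MRight => right_mathieu V
  | MPreTwoSided => pre_two_sided_mathieu V
  | MTwoSided => two_sided_mathieu V
  end.
End Mathieu.

Definition quasi_idempotent (K : fieldType) (n : nat) (A : 'M[K]_n.+1) : Prop :=
  exists r : K, r != 0 /\ A * A = r *: A.

Definition nontrivial_subspace (K : fieldType) (n : nat) (V : {vspace 'M[K]_n.+1}) : Prop :=
  V != 0%VS /\ V != fullv.

Definition minimal_nontrivial_mathieu (t : mathieu_type) (K : fieldType) (n : nat)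
  (V : {vspace 'M[K]_n.+1}) : Prop :=
  [/\ is_mathieu t (fun x => x \in V), nontrivial_subspace V &
      forall W : {vspace 'M[K]_n.+1},
        is_mathieu t (fun x => x \in W) -> nontrivial_subspace W ->
        (W <= V)%VS -> W = V].

From HB Require Import structures.
From mathcomp Require Import all_boot all_order all_algebra.
From Stdlib Require Import Classical_Prop.
Set Implicit Arguments. Unset Strict Implicit. Unset Printing Implicit Defensive.
Import GRing.Theory.
Local Open Scope ring_scope.

(* If A is not quasi-idempotent, every a in KA whose powers all lie in KA
   satisfies a^2 = 0, so KA is trivially a Mathieu subspace of every type;
   being a line it is minimal.  Conversely, a nonzero Mathieu subspace V
   contains a nonzero non-quasi-idempotent X: if a nonzero A in V is
   quasi-idempotent, its powers are multiples of A, so the Mathieu property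
   puts b A (or A b) into V for every b, and for n >= 2 some b makes b A
   (or A b) a nonzero square-zero matrix.  Minimality then forces V = KX. *)

Section MathieuTypes.
Variable R : pzRingType.
Implicit Types (V : {pred R}) (a : R).

Lemma mathieu_left_or_right t V :
  is_mathieu t V -> left_mathieu V \/ right_mathieu V.
Proof.
case: t => /=; [by left | by right | by case; left |].
move=> hV; left => a ha b; have [N HN] := hV a ha b 1.
by exists N => m /HN; rewrite mulr1.
Qed.

Lemma square_zero_mathieu t V : 0 \in V ->
  (forall a, all_pows_in V a -> a * a = 0) -> is_mathieu t V.
Proof.
move=> V0 sqr0.
have pow0 a m : all_pows_in V a -> (2 <= m)%N -> a ^+ m = 0.
  by move=> ha /subnK <-; rewrite exprD expr2 sqr0 // mulr0.
have left_V : left_mathieu V.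
  by move=> a ha b; exists 2%N => m /(pow0 a m ha) ->; rewrite mulr0.
have right_V : right_mathieu V.
  by move=> a ha b; exists 2%N => m /(pow0 a m ha) ->; rewrite mul0r.
case: t => //=; move=> a ha b c.
by exists 2%N => m /(pow0 a m ha) ->; rewrite mulr0 mul0r.
Qed.

End MathieuTypes.

Lemma quasi_idempotent_exprS (K : pzRingType) (B : algType K) (A : B) r :
  A * A = r *: A -> forall m, A ^+ m.+1 = r ^+ m *: A.
Proof.
move=> AA; elim=> [|m IHm]; first by rewrite expr1 expr0 scale1r.
by rewrite exprS IHm -scalerAr AA scalerA -exprSr.
Qed.

Lemma vline_minimal (K : fieldType) (vT : vectType K) (v : vT) (W : {vspace vT}) :
  W != 0%VS -> (W <= <[v]>)%VS -> W = <[v]>%VS.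
Proof.
move=> nzW sWv; apply/eqP; rewrite eqEdim sWv dim_vline.
by apply: leq_trans (leq_b1 _) _; rewrite lt0n dimv_eq0.
Qed.

Section SquareZeroMultiples.
Variable K : fieldType.

Lemma mulmx_col_row_neq0 m (u : 'cV[K]_m) (v : 'rV[K]_m) :
  u != 0 -> v != 0 -> u *m v != 0.
Proof.
move=> /cV0Pn[i ui] /rV0Pn[j vj]; apply/matrix0Pn; exists i, j.
by rewrite mxE big_ord1 mulf_neq0.
Qed.

Lemma mulmx_col_row_sqr0 m (u : 'cV[K]_m) (v : 'rV[K]_m) :
  v *m u = 0 -> (u *m v) *m (u *m v) = 0.
Proof. by move=> vu0; rewrite mulmxA -(mulmxA u) vu0 mulmx0 mul0mx. Qed.

(* The kernel of v : 'rV_m, m >= 2, has dimension at least m - 1 > 0. *)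
Lemma rV_annihilator m (v : 'rV[K]_m.+2) : exists2 u : 'cV_m.+2, u != 0 & v *m u = 0.
Proof.
have : kermx v^T != 0.
  rewrite -mxrank_eq0 mxrank_ker subn_eq0 -ltnNge.
  exact: leq_ltn_trans (rank_leq_col _) _.
case/matrix0Pn=> i [j kij]; exists (row i (kermx v^T))^T.
  by rewrite trmx_eq0; apply/rV0Pn; exists j; rewrite mxE.
by apply: trmx_inj; rewrite trmx_mul trmxK trmx0; apply/sub_kermxP/row_sub.
Qed.

Variable n : nat.
Local Notation M := 'M[K]_n.+2.

Lemma left_multiple_square_zero (A : M) :
  A != 0 -> exists b : M, b * A != 0 /\ b * A * (b * A) = 0.
Proof.
case/matrix0Pn=> i [j Aij]; have [u nz_u ru0] := rV_annihilator (row i A).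
exists (u *m delta_mx 0 i); rewrite -!mulmxE -mulmxA -rowE; split.
  by apply: mulmx_col_row_neq0 => //; apply/rV0Pn; exists j; rewrite mxE.
exact: mulmx_col_row_sqr0.
Qed.

Lemma right_multiple_square_zero (A : M) :
  A != 0 -> exists b : M, A * b != 0 /\ A * b * (A * b) = 0.
Proof.
rewrite -trmx_eq0 => /left_multiple_square_zero[b [nz sqr0]].
rewrite -!mulmxE in nz sqr0; exists b^T; rewrite -!mulmxE; split.
  by rewrite -trmx_eq0 trmx_mul trmxK.
by apply: trmx_inj; rewrite !trmx_mul trmxK trmx0.
Qed.

End SquareZeroMultiples.

Section LinesInMatrices.
Variables (K : fieldType) (n : nat).
Implicit Types (A X a : 'M[K]_n.+1).

Lemma square_zero_not_quasi_idempotent X :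
  X != 0 -> X * X = 0 -> ~ quasi_idempotent X.
Proof.
move=> nzX XX [r [nz_r]]; rewrite XX => /esym/eqP.
by rewrite scaler_eq0 (negbTE nz_r) (negbTE nzX).
Qed.

Lemma vline_pows_sqr0 A a : ~ quasi_idempotent A ->
  all_pows_in (fun x => x \in <[A]>%VS) a -> a * a = 0.
Proof.
move=> nqiA ha; move: (ha 1%N isT); rewrite expr1 => /vlineP[k ak]; subst a.
have [->|nz_k] := eqVneq k 0; first by rewrite scale0r mul0r.
move/(_ 2%N isT): ha => /vlineP[d]; rewrite expr2 -scalerAl -scalerAr scalerA => kkAA.
have AA : A * A = (d / (k * k)) *: A.
  by rewrite -[LHS](scalerK (mulf_neq0 nz_k nz_k)) kkAA scalerA mulrC.
have [r0|nz_r] := eqVneq (d / (k * k)) 0; last by case: nqiA; exists (d / (k * k)).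
by rewrite AA r0 scale0r scaler0.
Qed.

Lemma vline_mathieu t A : ~ quasi_idempotent A ->
  is_mathieu t (fun x => x \in <[A]>%VS).
Proof. by move=> nqiA; apply: square_zero_mathieu (mem0v _) _ => a; apply: vline_pows_sqr0. Qed.

End LinesInMatrices.

Section MathieuSubspaces.
Variables (K : fieldType) (n : nat).
Local Notation M := 'M[K]_n.+2.

Lemma vline_nontrivial (A : M) : A != 0 -> nontrivial_subspace <[A]>%VS.
Proof.
move=> nzA; split; first by rewrite -dimv_eq0 dim_vline nzA.
by apply/eqP => Afull; have := dim_vline A; rewrite Afull dimvf dim_matrix nzA.
Qed.

Lemma mathieu_has_non_quasi_idempotent t (V : {vspace M}) :
  is_mathieu t (fun x => x \in V) -> V != 0%VS ->
  exists X, [/\ X \in V, X != 0 & ~ quasi_idempotent X].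
Proof.
move=> /mathieu_left_or_right mathV nzV.
set A := vpick V; have AV : A \in V := memv_pick V.
have nzA : A != 0 by rewrite vpick0.
have [[r [nz_r AA]] | nqiA] := classic (quasi_idempotent A); last by exists A.
have powsA : all_pows_in (fun x => x \in V) A.
  by case=> // m _; rewrite (quasi_idempotent_exprS AA) memvZ.
have unscale N (X : M) : r ^+ N *: X \in V -> X \in V.
  by move=> rXV; rewrite -(scalerK (expf_neq0 N nz_r) X) memvZ.
case: mathV => [leftV | rightV].
- have [b [nz sqr0]] := left_multiple_square_zero nzA.
  exists (b * A); split=> //; last exact: square_zero_not_quasi_idempotent.
  have [N /(_ N.+1 (leqnSn N))] := leftV A powsA b.
  by rewrite (quasi_idempotent_exprS AA) -scalerAr; apply: unscale.
- have [b [nz sqr0]] := right_multiple_square_zero nzA.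
  exists (A * b); split=> //; last exact: square_zero_not_quasi_idempotent.
  have [N /(_ N.+1 (leqnSn N))] := rightV A powsA b.
  by rewrite (quasi_idempotent_exprS AA) -scalerAl; apply: unscale.
Qed.

End MathieuSubspaces.

Theorem proposition5p5 (K : fieldType) (n : nat) (t : mathieu_type)
  (V : {vspace 'M[K]_n.+2}) :
  minimal_nontrivial_mathieu t V <->
  exists A : 'M[K]_n.+2, [/\ A != 0, ~ quasi_idempotent A & V = <[A]>%VS].
Proof.
split.
  case=> mathV [nzV _] minV.
  have [X [XV nzX nqiX]] := mathieu_has_non_quasi_idempotent mathV nzV.
  exists X; split=> //; symmetry; apply: minV.
  - exact: vline_mathieu.
  - exact: vline_nontrivial.
  - by rewrite -memvE.
case=> A [nzA nqiA ->]; split.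
- exact: vline_mathieu.
- exact: vline_nontrivial.
- by move=> W _ [nzW _]; apply: vline_minimal.
Qed.
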